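(* Let $F$ be a finite field of characteristic $3$. Let $k\ge 0$ be an integer, $m=3k+1$, and $t$ an integer with $t^3\equiv 1\pmod m$ and $\gcd(m,t-1)=1$. Let $G=T_{3m}=\langle x,y\mid x^m=y^3=1,\ y^{-1}xy=x^t\rangle$ (of order $3m$), $FG$ its group algebra, and $H=\langle x\rangle$. Then $\dim_F Z(\Delta(G,H))=k$.
   Context: $\Delta(G,H)$ is the ideal of $FG$ generated by $\{h-1\mid h\in H\}$; $Z(R)$ denotes the center of a ring $R$. *)

From HB Require Import structures.
From mathcomp Require Import all_boot all_order all_algebra all_fingroup all_field.
Set Implicit Arguments. Unset Strict Implicit. Unset Printing Implicit Defensive.
Import GRing.Theory.
Local Open Scope ring_scope.

(* The group algebra F[gT] of a finite group gT over a field F, modelled as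
   the F-vector space of functions gT -> F (F^o = F as a module over itself),
   with convolution product. *)

Section GroupAlgebra.
Variables (F : fieldType) (gT : finGroupType).

Definition gbas (g : gT) : {ffun gT -> F^o} := [ffun h => (h == g)%:R].

Definition gmul (a b : {ffun gT -> F^o}) : {ffun gT -> F^o} :=
  [ffun g => \sum_(h : gT) (a h : F) * (b (h^-1 * g)%g : F)].

(* Delta(G,H): the two-sided ideal of F[G] generated by {h - 1 | h in H};
   it is the F-span of the elements a (h - 1) b with a, b group elements. *)
Definition augIdeal (H : {set gT}) : {vspace {ffun gT -> F^o}} :=
  <<[seq gmul (gmul (gbas p.1.1) (gbas p.2 - gbas 1%g)) (gbas p.1.2)
     | p <- enum [set q : (gT * gT) * gT | q.2 \in H]]>>%VS.

End GroupAlgebra.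

From HB Require Import structures.
From mathcomp Require Import all_boot all_order all_algebra all_fingroup all_field.
From mathcomp Require Import all_solvable.
Import GRing.Theory.
Set Implicit Arguments. Unset Strict Implicit. Unset Printing Implicit Defensive.
Local Open Scope ring_scope.

(* Every z in Delta(G,H) has vanishing coset sums
   \sum_(h in H) z(gh); if z also commutes with Delta, comparing both sides of
   z (gh - g) = (gh - g) z and summing over h in H (|H| = m = 1 in F) shows
   that z is a class function.  In T_3m a nontrivial h in H has centraliser H,
   so its class has 3 elements, and each coset vH with v outside H is a single
   H-class.  So the coset sums of a central z are m z(v) = z(v) off H and
   z(1) + 3(...) = z(1) at 1: z is a combination of the k class sums of the
   nontrivial classes in H.  Conversely these class sums are central, lie in
   Delta because 3 = 0 in F, and are linearly independent. *)

Section Indicators.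
Variables (F : fieldType) (T : finType).
Implicit Types (P : {set {set T}}) (A C : {set T}) (f : T -> F).

Definition set_indicator C : {ffun T -> F^o} := [ffun u => (u \in C)%:R].

Lemma sum_const_on_blocks P A f :
  partition P A -> {in P, forall C, #|C|%:R = 0 :> F} ->
  {in P, forall C, {in C &, forall u v, f u = f v}} ->
  \sum_(u in A) f u = 0.
Proof.
move=> partP cardP constP; rewrite -(cover_partition partP).
rewrite big_trivIset ?(partition_trivIset partP) // big1 // => C CP.
have [C0 | [v vC]] := set_0Vmem C; first by rewrite C0 big_set0.
have constC : {in C, forall u, f u = f v}.
  by move=> u uC; exact: (constP C CP u v uC vC).
by rewrite (eq_bigr _ constC) sumr_const -mulr_natr cardP // mulr0.
Qed.

Lemma partition_indicator_span P A (z : {ffun T -> F^o}) :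
  partition P A -> {in P, forall C, {in C &, forall u v, z u = z v}} ->
  {in [predC A], forall u, z u = 0} ->
  z \in <<[seq set_indicator C | C <- enum P]>>%VS.
Proof.
move=> partP constP zA.
pose zC C := oapp z 0 [pick v in C].
have zCE C u : C \in P -> u \in C -> zC C = z u.
  move=> CP uC; rewrite /zC; case: pickP => [v vC | /(_ u)]; rewrite ?uC //=.
  exact: (constP C CP v u vC uC).
suff -> : z = \sum_(C in P) zC C *: set_indicator C.
  by apply: rpred_sum => C CP; apply/rpredZ/memv_span/map_f; rewrite mem_enum.
apply/ffunP => u; rewrite sum_ffunE.
under eq_bigr do rewrite !ffunE.
case: (boolP (u \in A)) => uA; last first.
  rewrite zA // big1 // => C CP; case: (boolP (u \in C)) => [uC | _].
    by case/negP: uA; rewrite -(cover_partition partP); apply/bigcupP; exists C.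
  by rewrite scaler0.
have PuA : pblock P u \in P by rewrite pblock_mem ?(cover_partition partP).
have uPu : u \in pblock P u by rewrite mem_pblock (cover_partition partP).
rewrite (bigD1 _ PuA) /= big1 => [|C /andP[CP CPu]].
  by rewrite uPu addr0 (zCE _ u) // -[_ *: _]/(_ * 1) mulr1.
case: (boolP (u \in C)) => [uC | _]; last by rewrite scaler0.
by case/eqP: CPu; rewrite (def_pblock (partition_trivIset partP) CP uC).
Qed.

Lemma free_indicators P :
  trivIset P -> set0 \notin P -> free [seq set_indicator C | C <- enum P].
Proof.
move=> trivP P0; rewrite -[X in free X]in_tupleE; apply/freeP => c sum0 i.
have iP : (i < size (enum P))%N by rewrite -(size_map set_indicator) ltn_ord.
set Ci := nth set0 (enum P) i.
have CiP : Ci \in P by rewrite -mem_enum mem_nth.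
have [Ci0 | [u uCi]] := set_0Vmem Ci; first by rewrite -Ci0 CiP in P0.
have := congr1 (fun z : {ffun T -> F^o} => z u) sum0.
rewrite sum_ffunE ffunE (bigD1 i) //= big1 => [|j ji].
  rewrite ffunE (nth_map set0) // ffunE -/Ci uCi addr0.
  by rewrite -[_ *: _]/(_ * 1) mulr1.
have jP : (j < size (enum P))%N by rewrite -(size_map set_indicator) ltn_ord.
rewrite ffunE (nth_map set0) // ffunE.
case: (boolP (u \in _)) => [uCj | _]; last by rewrite scaler0.
have CjP : nth set0 (enum P) j \in P by rewrite -mem_enum mem_nth.
case: (eqVneq (nth set0 (enum P) j) Ci) => [CjCi | CjCi].
  move/eqP: CjCi; rewrite /Ci nth_uniq ?enum_uniq // => /eqP/val_inj/eqP.
  by rewrite (negbTE ji).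
by rewrite (disjointFr (trivIsetP trivP _ _ CjP CiP CjCi) uCj) in uCi.
Qed.

End Indicators.

Section GroupAlgebra.
Variables (F : fieldType) (gT : finGroupType).
Implicit Types (z w : {ffun gT -> F^o}) (a b g h u v : gT).

Lemma sum_mul_delta (f : gT -> F) a : \sum_h f h * (h == a)%:R = f a.
Proof.
rewrite (bigD1 a) //= eqxx mulr1 big1 ?addr0 // => h /negbTE ->.
by rewrite mulr0.
Qed.

Lemma gmul_gbasr z a : gmul z (gbas F a) = [ffun g => z (g * a^-1)%g].
Proof.
apply/ffunP=> g; rewrite !ffunE -(sum_mul_delta (fun h => z h)).
apply: eq_bigr => h _; rewrite ffunE; congr (_ * _%:R).
congr (nat_of_bool _); apply/eqP/eqP => E.
  by rewrite -E invMg invgK mulgA mulgV mul1g.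
by rewrite E invMg invgK mulgVK.
Qed.

Lemma gmul_gbasl z a : gmul (gbas F a) z = [ffun g => z (a^-1 * g)%g].
Proof.
apply/ffunP=> g; rewrite !ffunE -(sum_mul_delta (fun h => z (h^-1 * g)%g)).
by apply: eq_bigr => h _; rewrite ffunE mulrC.
Qed.

Lemma gmulBr z w1 w2 : gmul z (w1 - w2) = gmul z w1 - gmul z w2.
Proof.
apply/ffunP=> g; rewrite !ffunE -sumrB; apply: eq_bigr => h _.
by rewrite !ffunE mulrBr.
Qed.

Lemma gmulBl z w1 w2 : gmul (w1 - w2) z = gmul w1 z - gmul w2 z.
Proof.
apply/ffunP=> g; rewrite !ffunE -sumrB; apply: eq_bigr => h _.
by rewrite !ffunE mulrBl.
Qed.

Lemma gmul_gbas a b : gmul (gbas F a) (gbas F b) = gbas F (a * b)%g.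
Proof.
rewrite gmul_gbasl; apply/ffunP=> g; rewrite !ffunE; congr (nat_of_bool _)%:R.
by apply/eqP/eqP => [<- | ->]; rewrite ?mulKVg ?mulKg.
Qed.

Lemma gmul_gbas_augIdeal_gen a b h :
  gmul (gmul (gbas F a) (gbas F h - gbas F 1%g)) (gbas F b)
  = gbas F (a * h * b)%g - gbas F (a * b)%g.
Proof. by rewrite gmulBr !gmul_gbas mulg1 gmulBl !gmul_gbas. Qed.

Definition classfun_on z := forall u v, z (u ^ v)%g = z u.

Lemma classfun_gmulC z w : classfun_on z -> gmul z w = gmul w z.
Proof.
move=> cz; apply/ffunP=> g; rewrite !ffunE.
rewrite [RHS](reindex_inj (inj_comp (mulIg g) (@invg_inj gT))) /=.
apply: eq_bigr => a _; rewrite mulrC; congr (_ * _).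
by rewrite invMg invgK -mulgA -conjgE cz.
Qed.

Lemma classfun_span (X : seq {ffun gT -> F^o}) z :
  {in X, forall w, classfun_on w} -> z \in <<X>>%VS -> classfun_on z.
Proof.
move=> cX; rewrite -[X]in_tupleE => /coord_span -> u v.
rewrite !sum_ffunE; apply: eq_bigr => i _; rewrite !ffunE.
by rewrite cX // mem_nth.
Qed.

Section NormalSubgroup.
Variable H : {group gT}.
Hypothesis nH : forall g : gT, g \in 'N(H)%g.

Definition coset_sum z a := \sum_(h in H) z (a * h)%g.

Lemma coset_sum_gbas a b : coset_sum (gbas F b) a = ((a^-1 * b)%g \in H)%:R.
Proof.
rewrite /coset_sum; case: (boolP (_ \in H)) => abH.
  rewrite (bigD1 (a^-1 * b)%g) //= ffunE mulKVg eqxx big1 ?addr0 //.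
  move=> h /andP[_ hn].
  by rewrite ffunE; case: eqP => // abh; case/eqP: hn; rewrite -abh mulKg.
rewrite big1 // => h hH; rewrite ffunE; case: eqP => // abh.
by case/negP: abH; rewrite -abh mulKg.
Qed.

Lemma coset_sumB z w a : coset_sum (z - w) a = coset_sum z a - coset_sum w a.
Proof. by rewrite /coset_sum -sumrB; apply: eq_bigr => h _; rewrite !ffunE. Qed.

Lemma coset_sum_lin n (c : 'I_n -> F) (X : 'I_n -> {ffun gT -> F^o}) a :
  coset_sum (\sum_i c i *: X i) a = \sum_i c i * coset_sum (X i) a.
Proof.
rewrite /coset_sum; under eq_bigr do rewrite sum_ffunE.
rewrite exchange_big /=; apply: eq_bigr => i _; rewrite mulr_sumr.
by apply: eq_bigr => h _; rewrite ffunE.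
Qed.

Lemma augIdeal_coset_sum z a : z \in augIdeal F H -> coset_sum z a = 0.
Proof.
rewrite /augIdeal -[X in <<X>>%VS]in_tupleE => /coord_span ->.
rewrite coset_sum_lin big1 // => i _.
set X := in_tuple _.
have /mapP[[[b c] h] + ->] : X`_i \in (X : seq _) by exact: mem_nth.
rewrite mem_enum inE /= => hH.
rewrite gmul_gbas_augIdeal_gen coset_sumB !coset_sum_gbas.
have -> : (a^-1 * (b * h * c) = (a^-1 * (b * c)) * h ^ c)%g.
  by rewrite conjgE !mulgA mulgK.
by rewrite groupMr ?subrr ?mulr0 // memJ_norm.
Qed.

Lemma gbas_sub_augIdeal a b h : h \in H ->
  gbas F (a * h * b)%g - gbas F (a * b)%g \in augIdeal F H.
Proof.
move=> hH; rewrite -gmul_gbas_augIdeal_gen; apply/memv_span/mapP.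
by exists ((a, b), h); rewrite ?mem_enum ?inE.
Qed.

Lemma set_indicator_augIdeal (C : {set gT}) :
  C \subset H -> #|C|%:R = 0 :> F -> set_indicator F C \in augIdeal F H.
Proof.
move=> sCH C0.
have -> : set_indicator F C = \sum_(g in C) (gbas F g - gbas F 1%g).
  apply/ffunP => u; rewrite sum_ffunE ffunE.
  under eq_bigr do rewrite !ffunE.
  rewrite sumrB sumr_const -[_ *+ #|C|]mulr_natr C0 mulr0 subr0.
  case: (boolP (u \in C)) => uC.
    rewrite (bigD1 u) //= eqxx big1 ?addr0 // => g /andP[_ /negbTE].
    by rewrite eq_sym => ->.
  by rewrite big1 // => g gC; case: eqP => // ug; rewrite ug gC in uC.
apply: rpred_sum => g gC.
by have := gbas_sub_augIdeal 1 1 (subsetP sCH g gC); rewrite mul1g !mulg1.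
Qed.

Lemma coset_sum_conjV z a b :
  \sum_(h in H) z (a * (h^-1) ^ b)%g = coset_sum z a.
Proof.
rewrite /coset_sum [RHS](reindex_inj (inj_comp (conjg_inj b) (@invg_inj gT))).
rewrite /=.
by apply: eq_bigl => h; rewrite memJ_norm // groupV.
Qed.

Lemma augIdeal_center_classfun z : #|H|%:R != 0 :> F ->
  z \in augIdeal F H -> (forall w, w \in augIdeal F H -> gmul z w = gmul w z) ->
  classfun_on z.
Proof.
move=> HF zA cen.
suff shift u g : z (u * g^-1)%g = z (g^-1 * u)%g.
  by move=> u v; rewrite conjgE -{2}(mulgK v u) shift mulgA.
have step h : h \in H ->
    z (u * (g * h)^-1)%g - z (u * g^-1)%g
    = z ((g * h)^-1 * u)%g - z (g^-1 * u)%g.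
  move=> hH; have := cen _ (gbas_sub_augIdeal g 1 hH); rewrite !mulg1.
  rewrite gmulBr gmulBl !gmul_gbasr !gmul_gbasl => /ffunP /(_ u).
  by rewrite !ffunE.
have sumL : \sum_(h in H) z (u * (g * h)^-1)%g = 0.
  rewrite -[RHS](augIdeal_coset_sum (u * g^-1)%g zA).
  rewrite -(coset_sum_conjV _ _ g^-1).
  by apply: eq_bigr => h _; rewrite invMg conjgE invgK !mulgA mulgVK.
have sumR : \sum_(h in H) z ((g * h)^-1 * u)%g = 0.
  rewrite -[RHS](augIdeal_coset_sum (g^-1 * u)%g zA).
  rewrite -(coset_sum_conjV _ _ (g^-1 * u)%g).
  by apply: eq_bigr => h _; rewrite conjgE mulVKg invMg mulgA.
(* Summing step over H cancels the two translated coset sums. *)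
have : \sum_(h in H) (z (u * (g * h)^-1)%g - z (u * g^-1)%g)
       = \sum_(h in H) (z ((g * h)^-1 * u)%g - z (g^-1 * u)%g) by apply: eq_bigr.
rewrite !sumrB sumL sumR !sumr_const !sub0r => /oppr_inj eq_n.
by apply: (mulIf HF); rewrite !mulr_natr.
Qed.

End NormalSubgroup.

End GroupAlgebra.

Section MetacyclicGroup.
Variables (gT : finGroupType) (k : nat) (t : int) (x y : gT).
Local Notation m := (3 * k + 1)%N.
Hypotheses (coprime_t1 : coprimez m%:Z (t - 1)) (xm : (x ^+ m = 1)%g)
  (y3 : (y ^+ 3 = 1)%g) (xy : (x ^ y = x ^+ `|(t %% m%:Z)%Z|%N)%g)
  (gen_xy : <<[set x; y]>>%g = [set: gT]) (card_gT : #|gT| = (3 * m)%N).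
Local Notation H := <[x]>%g.

Local Open Scope group_scope.

Lemma m_gt0 : (0 < m)%N. Proof. by rewrite addn1. Qed.

Lemma norm_cycle g : g \in 'N(H).
Proof.
have yN : y \in 'N(H).
  apply/normP; rewrite -cycleJ; apply/eqP.
  by rewrite eqEcard cycle_subG {1}xy mem_cycle cycleJ cardJg leqnn.
have : <<[set x; y]>> \subset 'N(H).
  by rewrite gen_subG subUset !sub1set yN (subsetP (normG H)) ?cycle_id.
by rewrite gen_xy => /subsetP; apply; rewrite inE.
Qed.

Lemma order_x : #[x] = m.
Proof.
have dx : (#[x] %| m)%N by rewrite order_dvdn xm.
have ley : (#[y] <= 3)%N by rewrite dvdn_leq // order_dvdn y3.
have gen_xy' : H * <[y]> = [set: gT].
  apply/eqP; rewrite eqEsubset subsetT -gen_xy -norm_joinEr; last first.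
    by apply/subsetP => g _; apply: norm_cycle.
  by rewrite genS // subUset !sub1set !inE !cycle_id ?orbT.
have : (3 * m <= #[x] * 3)%N.
  rewrite -card_gT -cardsT -gen_xy' (leq_trans _ (leq_mul (leqnn #[x]) ley)) //.
  by rewrite !orderE mul_cardG leq_pmulr ?cardG_gt0.
rewrite mulnC leq_mul2r /= => lemx.
by apply/eqP; rewrite eqn_leq dvdn_leq ?m_gt0.
Qed.

Lemma cardH : #|H| = m. Proof. by rewrite -orderE order_x. Qed.

Lemma y_notin_cent1 h : h \in H -> h != 1 -> y \notin 'C[h].
Proof.
move=> /cycleP[i ->] xi1; apply: contra xi1 => /cent1P cyxi.
have : (x ^+ i) ^ y = x ^+ i by rewrite conjgE -cyxi mulKg.
rewrite conjXg xy -expgnA => /eqP; rewrite eq_expg_mod_order order_x => /eqP ti_i.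
suff : (m %| i)%N by rewrite -order_dvdn order_x.
have : (m%:Z %| (i%:Z * (t - 1))%R)%Z.
  rewrite mulrBr mulr1 -eqz_mod_dvd; apply/eqP.
  move: (congr1 Posz ti_i); rewrite -!modz_nat PoszM abszE.
  rewrite Num.Theory.ger0_norm ?modz_ge0 ?addn1 // => <-.
  by rewrite mulrC modzMml.
by rewrite Gauss_dvdzl // dvdzE.
Qed.

Lemma cent1_cycle h : h \in H -> h != 1 -> 'C[h] = H.
Proof.
move=> hH h1.
have sHC : H \subset 'C[h] by rewrite sub_cent1 (subsetP (cycle_abelian x)).
have dC : (#|'C[h]| %| 3 * m)%N by rewrite -card_gT -cardsT cardSg ?subsetT.
have [d defC] : exists d, #|'C[h]| = (d * m)%N.
  by apply/dvdnP; rewrite -cardH cardSg.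
have neC : #|'C[h]| != (3 * m)%N.
  apply: contraNneq (y_notin_cent1 hH h1) => cardC.
  suff -> : 'C[h] = [set: gT] by rewrite in_setT.
  by apply/eqP; rewrite eqEcard subsetT cardsT card_gT cardC leqnn.
apply/esym/eqP; rewrite eqEcard sHC cardH defC /=.
move: dC neC; rewrite defC dvdn_pmul2r ?m_gt0 //; clear defC.
by case: d => [|[|[|[|d]]]] //= _; rewrite ?mul1n ?eqxx.
Qed.

Lemma card_class_cycle h : h \in H -> h != 1 -> #|h ^: [set: gT]| = 3%N.
Proof.
move=> hH h1; rewrite -index_cent1 setTI cent1_cycle // -divgS ?subsetT //.
by rewrite cardsT card_gT cardH mulnK ?m_gt0.
Qed.

Lemma lcoset_class v : v \notin H -> v *: H = v ^: H.
Proof.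
move=> vH; apply/esym/eqP; rewrite eqEcard card_lcoset; apply/andP; split.
  apply/subsetP => _ /imsetP[a aH ->]; rewrite mem_lcoset.
  have -> : v^-1 * v ^ a = (a^-1) ^ v * a by rewrite !conjgE !mulgA.
  by rewrite groupM ?memJ_norm ?groupV ?norm_cycle.
rewrite card_in_imset // => a b aH bH /= vab.
have vab1 : v ^ (a * b^-1) = v by rewrite conjgM vab conjgK.
apply/eqP; rewrite eq_mulgV1; apply: contraR vH => ab1.
rewrite -(cent1_cycle _ ab1) ?groupM ?groupV //.
by apply/cent1P; rewrite /commute conjgC vab1.
Qed.

Local Notation G := [set: gT].

Definition cycle_classes := [set h ^: G | h in H^#]%g.

Lemma partition_cycle_classes : partition cycle_classes H^#%g.
Proof.
apply: orbit_partition; apply/subsetP => g _.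
by rewrite astabsJ normD1 norm_cycle.
Qed.

Lemma card_cycle_class C : C \in cycle_classes -> #|C| = 3%N.
Proof.
case/imsetP => h; rewrite !inE => /andP[h1 hH] ->.
exact: card_class_cycle.
Qed.

Lemma card_cycle_classes : #|cycle_classes| = k.
Proof.
have := card_uniform_partition card_cycle_class partition_cycle_classes.
have := cardsD1 1%g H; rewrite group1 cardH add1n addn1 => -[<-] /eqP.
by rewrite (mulnC #|_|) eqn_mul2l => /eqP.
Qed.

Lemma classfun_class_indicator (F : fieldType) C :
  C \in cycle_classes -> classfun_on (set_indicator F C).
Proof.
case/imsetP => h _ -> u v; rewrite !ffunE; congr (nat_of_bool _)%:R.
by apply/class_eqP/class_eqP => <-; rewrite classGidl ?inE.
Qed.

Definition class_indicators (F : fieldType) :=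
  [seq set_indicator F C | C <- enum cycle_classes].

Lemma dim_class_indicators (F : fieldType) :
  \dim <<class_indicators F>> = k.
Proof.
have := free_indicators F (partition_trivIset partition_cycle_classes).
rewrite (partition0 partition_cycle_classes) => /(_ isT) /eqP ->.
by rewrite size_map -cardE card_cycle_classes.
Qed.

Section CharacteristicThree.
Variable F : fieldType.
Local Open Scope ring_scope.
Hypothesis F3 : 3%:R = 0 :> F.
Local Notation Delta := (augIdeal F H).

Lemma cardH_F : #|H|%:R = 1 :> F.
Proof. by rewrite cardH natrD natrM F3 mul0r add0r. Qed.

Lemma classfun_augIdeal_vanish z :
  z \in Delta -> classfun_on z -> {in [predC H^#%g], forall u, z u = 0}.
Proof.
move=> zA cz u; rewrite !inE negb_and negbK => /orP[/eqP-> | uH].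
  have := augIdeal_coset_sum norm_cycle 1%g zA; rewrite /coset_sum.
  rewrite (bigD1 1%g) //= mulg1 (eq_bigl (mem H^#%g)) => [|h]; last first.
    by rewrite !inE andbC.
  under eq_bigr do rewrite mul1g.
  rewrite (sum_const_on_blocks partition_cycle_classes) ?addr0 // => C CP.
    by rewrite card_cycle_class.
  by case/imsetP: CP => h _ -> _ _ /imsetP[a _ ->] /imsetP[b _ ->]; rewrite !cz.
have := augIdeal_coset_sum norm_cycle u zA; rewrite /coset_sum.
rewrite (eq_bigr (fun _ => z u)) => [|h hH]; last first.
  have : (u * h)%g \in (u ^: H)%g by rewrite -lcoset_class // mem_lcoset mulKg.
  by case/imsetP => a _ ->; rewrite cz.
by rewrite sumr_const -mulr_natr cardH_F mulr1.
Qed.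

Lemma augIdeal_centerP z :
  z \in <<class_indicators F>>%VS <->
  z \in Delta /\ (forall w, w \in Delta -> gmul z w = gmul w z).
Proof.
have classfun_X : {in class_indicators F, forall w, classfun_on w}.
  by move=> _ /mapP[C CP ->]; apply: classfun_class_indicator; rewrite -mem_enum.
split=> [zX | [zA cen]].
  split=> [|w _]; last exact/classfun_gmulC/(classfun_span classfun_X).
  move: z zX; apply/subvP/span_subvP => _ /mapP[C CP ->].
  rewrite mem_enum in CP; apply: set_indicator_augIdeal; last first.
    by rewrite card_cycle_class.
  rewrite (subset_trans _ (subsetDl H [set 1%g])) //.
  by rewrite -(cover_partition partition_cycle_classes) bigcup_sup.
have HF : #|H|%:R != 0 :> F by rewrite cardH_F oner_neq0.
have cz := augIdeal_center_classfun norm_cycle HF zA cen.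
apply: (partition_indicator_span partition_cycle_classes).
  by move=> _ /imsetP[h _ ->] _ _ /imsetP[a _ ->] /imsetP[b _ ->]; rewrite !cz.
exact: classfun_augIdeal_vanish.
Qed.

End CharacteristicThree.

End MetacyclicGroup.

Unset Implicit Arguments.

Theorem corollary3p13 (F : finFieldType) (gT : finGroupType) (k : nat) (t : int)
    (x y : gT) :
  3%N \in [pchar F] ->
  let m := (3 * k + 1)%N in
  (t ^+ 3 == 1 %[mod m%:Z])%Z ->
  coprimez m%:Z (t - 1) ->
  (x ^+ m = 1)%g -> (y ^+ 3 = 1)%g ->
  (x ^ y = x ^+ `|(t %% m%:Z)%Z|%N)%g ->
  <<[set x; y]>>%g = [set: gT] ->
  #|gT| = (3 * m)%N ->
  exists V : {vspace {ffun gT -> F^o}},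
    (forall z, z \in V <->
       (z \in augIdeal F <[x]>%g /\
        forall w, w \in augIdeal F <[x]>%g -> gmul z w = gmul w z))
    /\ \dim V = k.
Proof.
(* t ^+ 3 = 1 mod m is forced by y ^+ 3 = 1. *)
move=> pF m _ coprime_t1 xm y3 xy gen_xy card_gT.
have F3 : 3%:R = 0 :> F := pcharf0 pF.
exists <<class_indicators x F>>%VS; split.
  exact: (augIdeal_centerP coprime_t1 xm y3 xy gen_xy card_gT F3).
exact: (dim_class_indicators coprime_t1 xm y3 xy gen_xy card_gT F).
Qed.
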